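(* Let $n,d\ge1$, $a,p\ge 0$, $s>0$, $r>0$, $K\ge 1$ integer, and let $S^c\subset\mathbb Z^d$. Consider a Hamiltonian, independent of $y$, of the form $$Q(x,w)=\sum_{\nu\in\mathbb Z^n,\ |\nu|_1\le K}\ \sum_{\alpha,\beta:\ |\alpha|+|\beta|\ge 1}e^{i\nu\cdot x}Q_{\nu,\alpha,\beta}z^\alpha\bar z^\beta,$$ in the variables $x\in\mathbb T^n_{\mathbb C}$ and $w=(z,\bar z)=(z_k,\bar z_k)_{k\in S^c}$ (so $Q$ has degree at least one in $w$ and is a trigonometric polynomial of degree $\le K$ in $x$). Write its Hamiltonian vector field as $X_Q=X_Q^{(y)}+X_Q^{(w)}$ with $$X_Q^{(y)}=\partial_xQ(x,w)\cdot\partial_y,\qquad X_Q^{(w)}=-i\,\partial_zQ(x,w)\cdot\partial_{\bar z}+i\,\partial_{\bar z}Q(x,w)\cdot\partial_z .$$ Then $$\|X_Q^{(y)}\|_{s,r}\le K\,\|X_Q^{(w)}\|_{s,r}.$$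
   Context: $\ell^{(a,p)}$ denotes the space of sequences $u=(u_k)_{k\in S^c}$ with $\|u\|_{a,p}^2=|u_0|^2+\sum_{k}|u_k|^2e^{2a|k|}|k|^{2p}<\infty$ ($|k|$ the Euclidean norm); $|\cdot|_1$ on $\mathbb Z^n$ or $\mathbb C^n$ is the $\ell^1$ norm and $|\cdot|_\infty$ the max norm. $\mathbb T^n_s=\{x\in\mathbb C^n/2\pi\mathbb Z^n:\ |\mathrm{Im}\,x|\le s\}$ and $D(s,r)=\{(x,y,w):\ x\in\mathbb T^n_s,\ |y|_1\le r^2,\ \|w\|_{a,p}\le r\}$, with $w=(z,\bar z)\in\ell^{(a,p)}\times\ell^{(a,p)}$. On $V=\mathbb C^n\times\mathbb C^n\times\ell^{(a,p)}\times\ell^{(a,p)}$ put $\|(x,y,z,\bar z)\|_{V,s,r}=\frac{|x|_\infty}{s}+\frac{|y|_1}{r^2}+\frac{\|z\|_{a,p}}{r}+\frac{\|\bar z\|_{a,p}}{r}$. For a vector field with formal expansion $X=\sum_{\nu,i,\alpha,\beta}X^{(\mathtt v)}_{\nu,i,\alpha,\beta}e^{i\nu\cdot x}y^iz^\alpha\bar z^\beta\partial_{\mathtt v}$ ($\mathtt v=x,y,z,\bar z$), its majorant is $MX=\sum|X^{(\mathtt v)}_{\nu,i,\alpha,\beta}|e^{s|\nu|_1}y^iz^\alpha\bar z^\beta\partial_{\mathtt v}$ and its norm is $\|X\|_{s,r}=\sup_{(y,z,\bar z)\in D(s,r)}\|MX\|_{V,s,r}$. *)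

From HB Require Import structures.
From mathcomp Require Import all_boot all_order all_algebra.
From mathcomp Require Import all_classical all_reals all_analysis.
From mathcomp Require Import finmap.
From mathcomp Require Import complex.

Set Implicit Arguments.
Unset Strict Implicit.
Unset Printing Implicit Defensive.

Import Order.TTheory GRing.Theory Num.Theory.
Local Open Scope ring_scope.
Local Open Scope classical_set_scope.

Section Defs.
Variable R : realType.

Definition cmod (z : R[i]) : R := Num.sqrt (@complex.Re R z ^+ 2 + @complex.Im R z ^+ 2).

Definition euclid (d : nat) (k : 'rV[int]_d) : R :=
  Num.sqrt (\sum_(i < d) ((k ord0 i)%:~R : R) ^+ 2).

Definition l1norm (n : nat) (nu : 'rV[int]_n) : R :=
  \sum_(i < n) `|((nu ord0 i)%:~R : R)|.

Definition weight (d : nat) (a p : R) (k : 'rV[int]_d) : R :=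
  if k == 0 then 1 else expR (2 * a * euclid k) * (euclid k `^ (2 * p)).

Definition esqrt (x : \bar R) : \bar R :=
  match x with
  | r%:E => (Num.sqrt r)%:E
  | +oo%E => +oo%E
  | -oo%E => 0%E
  end.

Definition sqnorm (d : nat) (a p : R) (Sc : set 'rV[int]_d)
    (u : 'rV[int]_d -> R[i]) : \bar R :=
  (\esum_(k in Sc) ((weight a p k) * cmod (u k) ^+ 2)%:E)%E.

Definition ellnorm (d : nat) (a p : R) (Sc : set 'rV[int]_d)
    (A : 'rV[int]_d -> \bar R) : \bar R :=
  esqrt (\esum_(k in Sc) ((weight a p k)%:E * (A k * A k)))%E.

(* multi-indices alpha : S^c -> N with finite support *)
Definition mindex (d : nat) := {fsfun 'rV[int]_d -> nat with 0%N}.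

Definition mdeg (d : nat) (al : mindex d) : nat := \sum_(k <- finsupp al) al k.

Definition supp_in (d : nat) (Sc : set 'rV[int]_d) (al : mindex d) : Prop :=
  forall k, k \in finsupp al -> Sc k.

Definition monabs (d : nat) (al : mindex d) (z : 'rV[int]_d -> R[i]) : R :=
  \prod_(k <- finsupp al) cmod (z k) ^+ al k.

(* |d/dz_k (z^alpha)| = alpha_k |z^(alpha - e_k)| *)
Definition dmonabs (d : nat) (k : 'rV[int]_d) (al : mindex d)
    (z : 'rV[int]_d -> R[i]) : R :=
  (al k)%:R * \prod_(j <- finsupp al)
                 cmod (z j) ^+ (if j == k then (al k).-1 else al j).

Definition Qidx (n d K : nat) (Sc : set 'rV[int]_d) :
    set ('rV[int]_n * mindex d * mindex d) :=
  [set t | l1norm t.1.1 <= K%:R /\ (1 <= mdeg t.1.2 + mdeg t.2)%N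
           /\ supp_in Sc t.1.2 /\ supp_in Sc t.2].

Definition coefM (n d : nat) (s : R)
    (Q : 'rV[int]_n -> mindex d -> mindex d -> R[i])
    (t : 'rV[int]_n * mindex d * mindex d) : R :=
  cmod (Q t.1.1 t.1.2 t.2) * expR (s * l1norm t.1.1).

Definition Vnorm (s r : R) (xinf y1 zn zbn : \bar R) : \bar R :=
  (xinf * (s^-1)%:E + y1 * (r ^- 2)%:E + zn * (r^-1)%:E + zbn * (r^-1)%:E)%E.

(* the domain D(s,r); w = (z, zbar) with ||w||^2 = ||z||^2 + ||zbar||^2 *)
Definition Dsr (n d : nat) (a p s r : R) (Sc : set 'rV[int]_d) :
    set ((('I_n -> R[i]) * ('I_n -> R[i])) *
         (('rV[int]_d -> R[i]) * ('rV[int]_d -> R[i]))) :=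
  [set P | (forall j, `|@complex.Im R (P.1.1 j)| <= s)
           /\ \sum_(j < n) cmod (P.1.2 j) <= r ^+ 2
           /\ (esqrt (sqnorm a p Sc P.2.1 + sqnorm a p Sc P.2.2) <= r%:E)%E].

(* majorant components of X_Q^(y) = d_x Q . d_y, at the point (z, zbar):
   coefficient of d_{y_j} is sum |i nu_j Q| e^{s|nu|_1} z^alpha zbar^beta *)
Definition XyM (n d K : nat) (s : R) (Sc : set 'rV[int]_d)
    (Q : 'rV[int]_n -> mindex d -> mindex d -> R[i])
    (z zb : 'rV[int]_d -> R[i]) (j : 'I_n) : \bar R :=
  (\esum_(t in @Qidx n d K Sc)
     (`|((t.1.1 ord0 j)%:~R : R)| * coefM s Q t
       * monabs t.1.2 z * monabs t.2 zb)%:E)%E.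

(* majorant of the d_z component  i d_{zbar_k} Q *)
Definition XzM (n d K : nat) (s : R) (Sc : set 'rV[int]_d)
    (Q : 'rV[int]_n -> mindex d -> mindex d -> R[i])
    (z zb : 'rV[int]_d -> R[i]) (k : 'rV[int]_d) : \bar R :=
  (\esum_(t in @Qidx n d K Sc)
     (coefM s Q t * monabs t.1.2 z * dmonabs k t.2 zb)%:E)%E.

(* majorant of the d_zbar component  -i d_{z_k} Q *)
Definition XzbM (n d K : nat) (s : R) (Sc : set 'rV[int]_d)
    (Q : 'rV[int]_n -> mindex d -> mindex d -> R[i])
    (z zb : 'rV[int]_d -> R[i]) (k : 'rV[int]_d) : \bar R :=
  (\esum_(t in @Qidx n d K Sc)
     (coefM s Q t * dmonabs k t.1.2 z * monabs t.2 zb)%:E)%E.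

Definition norm_Xy (n d K : nat) (a p s r : R) (Sc : set 'rV[int]_d)
    (Q : 'rV[int]_n -> mindex d -> mindex d -> R[i]) : \bar R :=
  ereal_sup [set Vnorm s r 0%E (\sum_(j < n) @XyM n d K s Sc Q P.2.1 P.2.2 j)%E 0%E 0%E
            | P in @Dsr n d a p s r Sc].

Definition norm_Xw (n d K : nat) (a p s r : R) (Sc : set 'rV[int]_d)
    (Q : 'rV[int]_n -> mindex d -> mindex d -> R[i]) : \bar R :=
  ereal_sup [set Vnorm s r 0%E 0%E
                   (@ellnorm d a p Sc (@XzM n d K s Sc Q P.2.1 P.2.2))
                   (@ellnorm d a p Sc (@XzbM n d K s Sc Q P.2.1 P.2.2))
            | P in @Dsr n d a p s r Sc].

End Defs.

From Pilot Require Import Defs.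
From HB Require Import structures.
From mathcomp Require Import all_boot all_order all_algebra.
From mathcomp Require Import all_classical all_reals all_analysis.
From mathcomp Require Import finmap.
From mathcomp Require Import complex.
From mathcomp Require Import zify ring lra.

(* For a monomial e^{i nu.x} z^alpha zb^beta, the y-components of X_Q carry
   the factors |nu_j|, whose sum |nu|_1 is at most K.  Euler's identity gives
   (|alpha| + |beta|) |z^alpha zb^beta|
     = sum_k |z_k| |d_{z_k} z^alpha| |zb^beta| + sum_k |zb_k| |z^alpha| |d_{zb_k} zb^beta|,
   and |alpha| + |beta| >= 1, so the majorant of X_Q^(y) is at most K times the
   pairing of (|z|, |zb|) with the majorant of X_Q^(w).  Since the weights of
   l^(a,p) are >= 1, Cauchy-Schwarz bounds this pairing by r times the
   l^(a,p)-norms of the z- and zb-components, and the factors r^-2 and r^-1 in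
   the norm on V turn this into the claim. *)

Set Implicit Arguments.
Unset Strict Implicit.
Unset Printing Implicit Defensive.

Import Order.TTheory GRing.Theory Num.Theory.
Local Open Scope ring_scope.
Local Open Scope classical_set_scope.

Section Reals.
Variable R : realType.

Lemma sum_mul_le_sqrt (I : Type) (s : seq I) (f g : I -> R) :
  \sum_(i <- s) f i * g i <=
  Num.sqrt (\sum_(i <- s) f i ^+ 2) * Num.sqrt (\sum_(i <- s) g i ^+ 2).
Proof.
set T := \sum_(i <- s) f i * g i.
set F := \sum_(i <- s) f i ^+ 2; set G := \sum_(i <- s) g i ^+ 2.
have F0 : 0 <= F by apply: sumr_ge0 => i _; exact: sqr_ge0.
have G0 : 0 <= G by apply: sumr_ge0 => i _; exact: sqr_ge0.
have minors_ge0 : 0 <= \sum_(i <- s) \sum_(j <- s) (f i * g j - f j * g i) ^+ 2.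
  by apply: sumr_ge0 => i _; apply: sumr_ge0 => j _; exact: sqr_ge0.
have lagrange : \sum_(i <- s) \sum_(j <- s) (f i * g j - f j * g i) ^+ 2 =
    \sum_(i <- s) \sum_(j <- s) (f i ^+ 2 * g j ^+ 2)
  + \sum_(i <- s) \sum_(j <- s) (g i ^+ 2 * f j ^+ 2)
  - \sum_(i <- s) \sum_(j <- s) ((f i * g i * 2) * (f j * g j)).
  rewrite -!big_split /= -sumrB; apply: eq_bigr => i _.
  rewrite -!big_split /= -sumrB; apply: eq_bigr => j _; ring.
rewrite lagrange -!big_distrlr -mulr_suml -/F -/G -/T in minors_ge0.
have T2 : T ^+ 2 <= F * G.
  by have : 0 <= F * G + G * F - T * 2 * T := minors_ge0; nra.
apply: le_trans (ler_norm T) _.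
by rewrite -sqrtr_sqr -sqrtrM // ler_sqrt //; exact: mulr_ge0.
Qed.

Lemma sum_mul_le_sqrt_weight (I : Type) (s : seq I) (w f g : I -> R) :
  (forall i, 1 <= w i) ->
  \sum_(i <- s) f i * g i <=
  Num.sqrt (\sum_(i <- s) w i * f i ^+ 2) * Num.sqrt (\sum_(i <- s) w i * g i ^+ 2).
Proof.
move=> w1; have w0 i : 0 <= w i := le_trans ler01 (w1 i).
apply: le_trans (sum_mul_le_sqrt s f g) _.
have le_weight (h : I -> R) :
    Num.sqrt (\sum_(i <- s) h i ^+ 2) <= Num.sqrt (\sum_(i <- s) w i * h i ^+ 2).
  rewrite ler_sqrt; last by apply: sumr_ge0 => i _; rewrite mulr_ge0 ?sqr_ge0 ?w0.
  by apply: ler_sum => i _; rewrite ler_peMl ?sqr_ge0.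
by apply: ler_pM; rewrite ?sqrtr_ge0 ?le_weight.
Qed.

Lemma esqrt_ge0 (x : \bar R) : (0 <= esqrt x)%E.
Proof. by case: x => [x| |] //=; rewrite lee_fin sqrtr_ge0. Qed.

Lemma esqrt_le_sqr (x : \bar R) (r : R) :
  (0 <= x)%E -> 0 <= r -> (esqrt x <= r%:E)%E -> (x <= (r ^+ 2)%:E)%E.
Proof.
case: x => [x| |] //= x0 r0; rewrite ?lee_fin // => h.
have := sqr_sqrtr x0; have := sqrtr_ge0 x; nra.
Qed.

Lemma fsum_le_esum (T : choiceType) (I : set T) (ts : {fset T}) (f : T -> R) :
  [set` ts] `<=` I -> ((\sum_(t <- ts) f t)%:E <= \esum_(t in I) (f t)%:E)%E.
Proof.
move=> tsI; apply: esum_ge; exists [set` ts]; first by split.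
by rewrite fsbig_finite //= set_fsetK sumEFin.
Qed.

Lemma le_esum_scale (T : choiceType) (I : set T) (f g : T -> R) (c : R) :
  0 <= c -> (forall t, I t -> f t <= c * g t) ->
  (\esum_(t in I) (f t)%:E <= c%:E * \esum_(t in I) (g t)%:E)%E.
Proof.
move=> c0 fg; apply: ge_ereal_sup => _ [X [finX XI] <-].
rewrite fsbig_finite //= sumEFin.
have XI' : [set` fset_set X] `<=` I.
  by move=> t /=; rewrite in_fset_set // => /set_mem /XI.
apply: (@le_trans _ _ (c%:E * (\sum_(t <- fset_set X) g t)%:E)%E); last first.
  by apply: lee_wpmul2l; [rewrite lee_fin | exact: fsum_le_esum].
rewrite -EFinM lee_fin mulr_sumr big_seq [leRHS]big_seq; apply: ler_sum => t.
by move=> /XI' /fg.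
Qed.

End Reals.

Section Norms.
Variables (R : realType) (d : nat).
Implicit Types (k : 'rV[int]_d) (al : mindex d) (z : 'rV[int]_d -> R[i]).

Lemma cmod_ge0 (x : R[i]) : 0 <= cmod x.
Proof. exact: sqrtr_ge0. Qed.

Lemma monabs_ge0 al z : 0 <= monabs al z.
Proof. by apply: prodr_ge0 => j _; apply: exprn_ge0; exact: cmod_ge0. Qed.

Lemma dmonabs_ge0 k al z : 0 <= dmonabs k al z.
Proof.
by apply: mulr_ge0 => //; apply: prodr_ge0 => j _; apply: exprn_ge0; exact: cmod_ge0.
Qed.

Lemma euclid_ge1 k : k != 0 -> 1 <= @euclid R d k.
Proof.
move=> k0; have [i ki0] : exists i, k ord0 i != 0.
  apply/existsP; apply: contraR k0 => /existsPn k0.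
  by apply/eqP/rowP => i; rewrite mxE; apply/eqP/negPn/k0.
have sum_ge0 (P : pred 'I_d) : 0 <= \sum_(j | P j) ((k ord0 j)%:~R : R) ^+ 2.
  by apply: sumr_ge0 => j _; exact: sqr_ge0.
rewrite /euclid -[leLHS]sqrtr1 ler_sqrt // (bigD1 i) //= -[leLHS]addr0 lerD //.
rewrite expr2 -intrM ler1z; move: ki0; set x := k ord0 i; nia.
Qed.

Lemma weight_ge1 (a p : R) k : 0 <= a -> 0 <= p -> 1 <= weight a p k.
Proof.
move=> a0 p0; rewrite /weight; case: eqP => // /eqP /euclid_ge1 e1.
have e0 : 0 <= @euclid R d k by exact: le_trans e1.
apply: mulr_ege1.
  by apply: le_trans (expR_ge1Dx _); rewrite lerDl !mulr_ge0.
by rewrite -[leLHS](powRr0 (euclid R k)) ler_powR // mulr_ge0.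
Qed.

Lemma euler_monabs al z (U : {fset 'rV[int]_d}) : (finsupp al `<=` U)%fset ->
  \sum_(k <- U) cmod (z k) * dmonabs k al z = (mdeg al)%:R * monabs al z.
Proof.
move=> alU; rewrite -(big_fset_incl _ alU); last first.
  by move=> k _; rewrite mem_finsupp negbK /dmonabs => /eqP ->; rewrite mul0r mulr0.
rewrite /mdeg natr_sum mulr_suml big_seq [RHS]big_seq; apply: eq_bigr => k k_al.
rewrite /dmonabs /monabs (bigD1_seq k) //= [in RHS](bigD1_seq k) //= eqxx.
have al_k : (0 < al k)%N by move: k_al; rewrite mem_finsupp => /eqP; lia.
rewrite -[X in _ = _ * (_ ^+ X * _)](prednK al_k) exprS.
under eq_bigr => j /negPf -> do [].
by rewrite mulrCA !mulrA.
Qed.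

Lemma sqnorm_ge0 (a p : R) (Sc : set 'rV[int]_d) z :
  0 <= a -> 0 <= p -> (0 <= sqnorm a p Sc z)%E.
Proof.
move=> a0 p0; apply: esum_ge0 => k _.
by rewrite lee_fin mulr_ge0 ?sqr_ge0 // (le_trans ler01 (weight_ge1 _ a0 p0)).
Qed.

Lemma sum_mul_le_ellnorm (a p r : R) (Sc : set 'rV[int]_d) (U : {fset 'rV[int]_d})
    (c : 'rV[int]_d -> R) (A : 'rV[int]_d -> \bar R) :
  0 <= a -> 0 <= p -> 0 < r -> [set` U] `<=` Sc ->
  (forall k, 0 <= c k) -> (forall k, (0 <= A k)%E) ->
  (\esum_(k in Sc) (weight a p k * c k ^+ 2)%:E <= (r ^+ 2)%:E)%E ->
  (\sum_(k <- U) (c k)%:E * A k <= r%:E * ellnorm a p Sc A)%E.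
Proof.
move=> a0 p0 r0 USc c0 A0 c_le.
have w1 k : 1 <= weight a p k := weight_ge1 k a0 p0.
have w0 k : 0 <= weight a p k := le_trans ler01 (w1 k).
have U_fsets : fsets Sc [set` U] by split.
rewrite /ellnorm; set N := esum _ _.
have N_ge0 : (0 <= N)%E by apply: esum_ge0 => k _; rewrite !mule_ge0 ?lee_fin.
have N_geU : (\sum_(k <- U) (weight a p k)%:E * (A k * A k) <= N)%E.
  by apply: esum_ge; exists [set` U]; rewrite // fsbig_finite //= set_fsetK.
have N_ge1 k : k \in U -> ((weight a p k)%:E * (A k * A k) <= N)%E.
  move=> kU; apply: esum_ge; exists [set k]; last by rewrite fsbig_set1.
  by split=> [|_ ->]; [exact: finite_set1 | exact: USc].
have cU : \sum_(k <- U) weight a p k * c k ^+ 2 <= r ^+ 2.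
  by rewrite -lee_fin -sumEFin; apply: le_trans c_le; apply: esum_ge; exists [set` U];
    rewrite // fsbig_finite //= set_fsetK.
move: N N_ge0 N_geU N_ge1 => [N| |] N_ge0 N_geU N_ge1 //=; last first.
  by rewrite gt0_muley ?lte_fin ?leey.
have A_fin k : k \in U -> A k = (fine (A k))%:E.
  move=> kU; have := N_ge1 k kU; have := A0 k; case: (A k) => [x| |] //= _.
  by rewrite mulyy gt0_muley ?lte_fin // (lt_le_trans ltr01 (w1 k)).
rewrite big_seq (eq_bigr (fun k => (c k * fine (A k))%:E)); last first.
  by move=> k /A_fin {1}->.
rewrite -big_seq sumEFin -EFinM lee_fin.
rewrite big_seq (eq_bigr (fun k => (weight a p k * fine (A k) ^+ 2)%:E)) in N_geU;
  last by move=> k /A_fin ->; rewrite -!EFinM expr2.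
rewrite -big_seq sumEFin lee_fin in N_geU.
apply: le_trans (sum_mul_le_sqrt_weight U c (fine \o A) w1) _.
apply: ler_pM; rewrite ?sqrtr_ge0 // ?ler_sqrt //.
by rewrite -(ger0_norm (ltW r0)) -sqrtr_sqr ler_sqrt ?sqr_ge0.
Qed.

End Norms.

Section Majorant.
Variables (R : realType) (n d K : nat) (s : R) (Sc : set 'rV[int]_d).
Variables (Q : 'rV[int]_n -> mindex d -> mindex d -> R[i]) (z zb : 'rV[int]_d -> R[i]).
Local Notation index := ('rV[int]_n * mindex d * mindex d)%type.

Definition Qterm (t : index) : R := Defs.coefM s Q t * monabs t.1.2 z * monabs t.2 zb.
Definition dzQterm (k : 'rV[int]_d) (t : index) : R :=
  Defs.coefM s Q t * dmonabs k t.1.2 z * monabs t.2 zb.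
Definition dzbQterm (k : 'rV[int]_d) (t : index) : R :=
  Defs.coefM s Q t * monabs t.1.2 z * dmonabs k t.2 zb.

Definition supp_union (ts : seq index) : {fset 'rV[int]_d} :=
  (\bigcup_(t <- ts) (finsupp t.1.2 `|` finsupp t.2))%fset.

Lemma coefM_ge0 t : 0 <= Defs.coefM s Q t.
Proof. by rewrite mulr_ge0 ?cmod_ge0 ?expR_ge0. Qed.

Lemma Qterm_ge0 t : 0 <= Qterm t.
Proof.
by rewrite /Qterm; apply: mulr_ge0; [apply: mulr_ge0|]; rewrite ?coefM_ge0 ?monabs_ge0.
Qed.

Lemma dzQterm_ge0 k t : 0 <= dzQterm k t.
Proof.
rewrite /dzQterm; apply: mulr_ge0; [apply: mulr_ge0|];
  by rewrite ?coefM_ge0 ?monabs_ge0 ?dmonabs_ge0.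
Qed.

Lemma dzbQterm_ge0 k t : 0 <= dzbQterm k t.
Proof.
rewrite /dzbQterm; apply: mulr_ge0; [apply: mulr_ge0|];
  by rewrite ?coefM_ge0 ?monabs_ge0 ?dmonabs_ge0.
Qed.

Lemma sum_XyM_esum :
  (\sum_(j < n) XyM K s Sc Q z zb j =
   \esum_(t in Qidx R K Sc) (l1norm R t.1.1 * Qterm t)%:E)%E.
Proof.
rewrite /XyM -esum_sum; last first.
  by move=> t j _ _; have := Qterm_ge0 t; rewrite lee_fin /Qterm -!mulrA; exact: mulr_ge0.
apply: eq_esum => t _; rewrite sumEFin /l1norm mulr_suml.
by congr EFin; apply: eq_bigr => j _; rewrite /Qterm !mulrA.
Qed.

(* The only use of the condition |alpha| + |beta| >= 1. *)
Lemma Qterm_le_euler t (U : {fset 'rV[int]_d}) : Qidx R K Sc t ->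
  (finsupp t.1.2 `<=` U)%fset -> (finsupp t.2 `<=` U)%fset ->
  Qterm t <= \sum_(k <- U) cmod (z k) * dzQterm k t
           + \sum_(k <- U) cmod (zb k) * dzbQterm k t.
Proof.
move=> [_ [deg_ge1 _]] al_U be_U.
have -> : \sum_(k <- U) cmod (z k) * dzQterm k t =
          Defs.coefM s Q t * monabs t.2 zb * \sum_(k <- U) cmod (z k) * dmonabs k t.1.2 z.
  by rewrite mulr_sumr; apply: eq_bigr => k _; rewrite /dzQterm; ring.
have -> : \sum_(k <- U) cmod (zb k) * dzbQterm k t =
          Defs.coefM s Q t * monabs t.1.2 z * \sum_(k <- U) cmod (zb k) * dmonabs k t.2 zb.
  by rewrite mulr_sumr; apply: eq_bigr => k _; rewrite /dzbQterm; ring.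
rewrite !euler_monabs // (_ : _ + _ = (mdeg t.1.2 + mdeg t.2)%:R * Qterm t).
  by rewrite ler_peMl ?Qterm_ge0 ?ler1n.
by rewrite natrD /Qterm; ring.
Qed.

Lemma sum_Qterm_le (ts : {fset index}) : [set` ts] `<=` Qidx R K Sc ->
  \sum_(t <- ts) Qterm t <=
    \sum_(k <- supp_union ts) cmod (z k) * \sum_(t <- ts) dzQterm k t
  + \sum_(k <- supp_union ts) cmod (zb k) * \sum_(t <- ts) dzbQterm k t.
Proof.
move=> tsQ; under [in leRHS]eq_bigr do rewrite mulr_sumr.
under [X in _ <= _ + X]eq_bigr do rewrite mulr_sumr.
rewrite !(exchange_big _ _ ts) -big_split /= big_seq [leRHS]big_seq.
apply: ler_sum => t t_ts.
have t_U : (finsupp t.1.2 `|` finsupp t.2 `<=` supp_union ts)%fset by exact: bigfcup_sup.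
apply: Qterm_le_euler; first exact: tsQ.
  by apply: fsubset_trans t_U; exact: fsubsetUl.
by apply: fsubset_trans t_U; exact: fsubsetUr.
Qed.

Variables (a p r : R).
Hypotheses (a_ge0 : 0 <= a) (p_ge0 : 0 <= p) (r_gt0 : 0 < r).

Lemma fsum_cmod_le_ellnorm (u : 'rV[int]_d -> R[i]) (f : 'rV[int]_d -> index -> R)
    (ts : {fset index}) :
  (sqnorm a p Sc u <= (r ^+ 2)%:E)%E -> [set` ts] `<=` Qidx R K Sc ->
  [set` supp_union ts] `<=` Sc -> (forall k t, 0 <= f k t) ->
  ((\sum_(k <- supp_union ts) cmod (u k) * \sum_(t <- ts) f k t)%:E <=
   r%:E * ellnorm a p Sc (fun k => \esum_(t in Qidx R K Sc) (f k t)%:E))%E.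
Proof.
move=> u_le tsQ USc f_ge0.
have cmod_u_ge0 k : 0 <= cmod (u k) by exact: cmod_ge0.
apply: le_trans (sum_mul_le_ellnorm a_ge0 p_ge0 r_gt0 USc cmod_u_ge0 _ u_le); last first.
  by move=> k; apply: esum_ge0 => t _; rewrite lee_fin.
rewrite -sumEFin; apply: lee_sum => k _; rewrite EFinM.
by apply: lee_wpmul2l; [rewrite lee_fin cmod_ge0 | exact: fsum_le_esum].
Qed.

Lemma esum_Qterm_le :
  (sqnorm a p Sc z <= (r ^+ 2)%:E)%E -> (sqnorm a p Sc zb <= (r ^+ 2)%:E)%E ->
  (\esum_(t in Qidx R K Sc) (Qterm t)%:E <=
   r%:E * ellnorm a p Sc (XzM K s Sc Q z zb) +
   r%:E * ellnorm a p Sc (XzbM K s Sc Q z zb))%E.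
Proof.
move=> z_le zb_le; apply: ge_ereal_sup => _ [X [finX XQ] <-].
rewrite fsbig_finite // sumEFin; set ts := fset_set X.
have tsQ : [set` ts] `<=` Qidx R K Sc.
  by move=> t /=; rewrite in_fset_set // => /set_mem /XQ.
have USc : [set` supp_union ts] `<=` Sc.
  move=> k /= /bigfcupP [t /andP [/tsQ [_ [_ [al_Sc be_Sc]]] _]].
  by rewrite inE => /orP [/al_Sc | /be_Sc].
have := sum_Qterm_le tsQ; rewrite -lee_fin EFinD => /le_trans; apply.
by rewrite addeC; apply: leeD; apply: fsum_cmod_le_ellnorm;
  rewrite // => k t; rewrite ?dzQterm_ge0 ?dzbQterm_ge0.
Qed.

Lemma sum_XyM_le :
  (sqnorm a p Sc z <= (r ^+ 2)%:E)%E -> (sqnorm a p Sc zb <= (r ^+ 2)%:E)%E ->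
  (\sum_(j < n) XyM K s Sc Q z zb j <=
   (K%:R)%:E * (r%:E * ellnorm a p Sc (XzM K s Sc Q z zb) +
                r%:E * ellnorm a p Sc (XzbM K s Sc Q z zb)))%E.
Proof.
move=> z_le zb_le; rewrite sum_XyM_esum.
apply: le_trans (le_esum_scale (ler0n _ K) _) _.
  by move=> t [l1_le_K _]; apply: ler_wpM2r; rewrite ?Qterm_ge0.
by apply: lee_wpmul2l; [rewrite lee_fin | exact: esum_Qterm_le].
Qed.

End Majorant.

Lemma Dsr_sqnorm_le (R : realType) (n d : nat) (a p s r : R) (Sc : set 'rV[int]_d)
    (P : (('I_n -> R[i]) * ('I_n -> R[i])) *
         (('rV[int]_d -> R[i]) * ('rV[int]_d -> R[i]))) :
  0 <= a -> 0 <= p -> 0 < r -> Dsr a p s r Sc P ->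
  (sqnorm a p Sc P.2.1 <= (r ^+ 2)%:E)%E /\ (sqnorm a p Sc P.2.2 <= (r ^+ 2)%:E)%E.
Proof.
move=> a0 p0 r0 [_ [_ w_le]].
have z_ge0 := sqnorm_ge0 Sc P.2.1 a0 p0; have zb_ge0 := sqnorm_ge0 Sc P.2.2 a0 p0.
have sum_le := esqrt_le_sqr (adde_ge0 z_ge0 zb_ge0) (ltW r0) w_le.
by split; apply: le_trans sum_le; [exact: leeDl | exact: leeDr].
Qed.

Lemma Vnorm_y_le (R : realType) (s r c : R) (A Nz Nzb : \bar R) :
  0 < r -> 0 <= c -> (0 <= Nz)%E -> (0 <= Nzb)%E ->
  (A <= c%:E * (r%:E * Nz + r%:E * Nzb))%E ->
  (Vnorm s r 0 A 0 0 <= c%:E * Vnorm s r 0 0 Nz Nzb)%E.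
Proof.
move=> r0 c0 Nz0 Nzb0 A_le; rewrite /Vnorm !mul0e !add0e !adde0.
have r2_ge0 : (0 <= (r ^- 2)%:E)%E by rewrite lee_fin invr_ge0 exprn_ge0 // ltW.
apply: le_trans (lee_wpmul2r r2_ge0 A_le) _.
have r_r2 : r * r ^- 2 = r^-1 by rewrite expr2 invfM mulrA divff ?gt_eqF // mul1r.
have rNz : (0 <= r%:E * Nz)%E by rewrite mule_ge0 // lee_fin ltW.
have rNzb : (0 <= r%:E * Nzb)%E by rewrite mule_ge0 // lee_fin ltW.
rewrite -muleA (ge0_muleDl _ rNz rNzb) (muleC r%:E Nz) (muleC r%:E Nzb).
by rewrite -!muleA -!EFinM r_r2.
Qed.

Theorem lemmaA6 (R : realType) (n d : nat) (a p s r : R) (K : nat)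
    (Sc : set 'rV[int]_d)
    (Q : 'rV[int]_n -> mindex d -> mindex d -> R[i]) :
  (1 <= n)%N -> (1 <= d)%N -> 0 <= a -> 0 <= p -> 0 < s -> 0 < r ->
  (1 <= K)%N ->
  (@norm_Xy R n d K a p s r Sc Q <= (K%:R)%:E * @norm_Xw R n d K a p s r Sc Q)%E.
Proof.
move=> _ _ a0 p0 _ r0 _; apply: ge_ereal_sup => _ [P DP <-].
have [z_le zb_le] := Dsr_sqnorm_le a0 p0 r0 DP.
have Xw_le : (Vnorm s r 0 0 (ellnorm a p Sc (XzM K s Sc Q P.2.1 P.2.2))
                          (ellnorm a p Sc (XzbM K s Sc Q P.2.1 P.2.2))
              <= norm_Xw K a p s r Sc Q)%E by apply: ereal_sup_ubound; exists P.
apply: le_trans (lee_wpmul2l _ Xw_le); last by rewrite lee_fin.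
apply: Vnorm_y_le; rewrite ?esqrt_ge0 //.
exact: sum_XyM_le.
Qed.
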